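(* Let $T$ be a bounded saturation theory, let $G$ and $E$ be finite sets of predicates of $T$, and let $\tau_e := \mathit{SDP}_T(G,E)$. Then for every subset $G' \subseteq G$, $[\tau_e]_{G'} = {\tt true}$ if and only if $\mathit{DP}_T(G' \cup \widetilde{E})$ returns UNSATISFIABLE.
   Context: A predicate is an atomic formula or its negation; a finite set of predicates is identified with the conjunction of its elements. The theory $T$ comes with inference rules; a rule instance is written $g \mathrel{:-} g_1,\dots,g_k$, meaning that $g$ (a predicate, or the contradiction symbol $\bot$) can be derived in one step from predicates $g_1,\dots,g_k$. For a set $H$ of predicates, $\widetilde{H} := \{\neg h : h \in H\}$. Saturation procedure $\mathrm{Sat}_N(H)$ (for a finite set $H$ of predicates and integer $N\ge 0$): (1) $W := H$. (2) Repeat $N$ times: set $W' := W$; for every predicate $g \notin W'$ for which there is a rule instance $g \mathrel{:-} g_1,\dots,g_k$ with all $g_j \in W'$, add $g$ to $W$. (3) If there is a rule instance $\bot \mathrel{:-} g_1,\dots,g_k$ with all $g_j\in W$, return UNSATISFIABLE, otherwise SATISFIABLE. $T$ is a bounded saturation theory if there is a function $d_T$ assigning to each finite set $H$ of predicates a natural number $d_T(H)$ such that for every $N \ge d_T(H)$, $\mathrm{Sat}_N(H)$ returns UNSATISFIABLE iff $H$ is unsatisfiable in $T$. Write $\mathit{DP}_T(H) := \mathrm{Sat}_{d_T(H)}(H)$ and, for a finite set $S$, $D_T(S) := \max\{d_T(S') : S' \subseteq S\}$. Symbolic decision procedure $\mathit{SDP}_T(G,E)$: introduce a Boolean variable $b_g$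 for each $g\in G$ (the set $B_G$). Let $N := D_T(G\cup\widetilde{E})$. (1) $W := G \cup \widetilde{E}$; set $\tau_{(g,0)} := b_g$ for $g\in G$ and $\tau_{(\neg e_i,0)} := {\tt true}$ for $e_i\in E$. (2) For $i = 1,\dots,N$: $W' := W$; set $S(g) := \emptyset$ for every predicate $g$; for every $g\in W'$ add $\tau_{(g,i-1)}$ to $S(g)$; for every predicate $g$ and every rule instance $g \mathrel{:-} g_1,\dots,g_k$ with all $g_m \in W'$, add the conjunction $\bigwedge_{m=1}^k \tau_{(g_m,i-1)}$ to $S(g)$ and add $g$ to $W$; then for each $g \in W$ set $\tau_{(g,i)} := \bigvee_{d\in S(g)} d$ and $\tau_{(g,\top)} := \tau_{(g,i)}$. (3) Let $S(e)$ be the set of conjunctions $\bigwedge_{m=1}^k \tau_{(g_m,\top)}$ over all rule instances $\bot \mathrel{:-} g_1,\dots,g_k$ with $\{g_1,\dots,g_k\}\subseteq W$, and set $\tau_e := \bigvee_{d\in S(e)} d$ (empty disjunction is ${\tt false}$). (4) Return $\tau_e$, a negation-free Boolean expression (with shared subexpressions) whose leaves are in $B_G$ or are constants. For a Boolean expression $\tau$ with leaves in $B_G$ and $G'\subseteq G$, $[\tau]_{G'}$ is the truth value of $\tau$ obtained by replacing each leaf $b_g$ by ${\tt true}$ if $g\in G'$ and ${\tt false}$ otherwise, with $\wedge,\vee$ interpreted as usual. *)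

From HB Require Import structures.
From mathcomp Require Import all_boot all_order.
From mathcomp Require Import finmap.
Set Implicit Arguments. Unset Strict Implicit. Unset Printing Implicit Defensive.
Local Open Scope fset_scope.

(* Negation-free Boolean expressions with leaves b_v (v : V) or constants.
   Conjunctions/disjunctions are indexed by an arbitrary index type (in the
   intended use these are finite). *)
Inductive bexpr (V : Type) : Type :=
| BVar of V
| BConst of bool
| BAnd (I : Type) of (I -> bexpr V)
| BOr (I : Type) of (I -> bexpr V).

Arguments BConst {V} b.

Fixpoint beval (V : Type) (rho : V -> bool) (t : bexpr V) : Prop :=
  match t with
  | BVar v => rho v
  | BConst b => b
  | BAnd _ f => forall i, beval rho (f i)
  | BOr _ f => exists i, beval rho (f i)
  end.

Section Theory.
(* A theory: predicates P, the negation operation on predicates,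
   rule instances  rule (Some g) gs  meaning  g :- gs, and  rule None gs
   meaning  bot :- gs, and the semantic notion "H is unsatisfiable in T". *)
Variables (P : choiceType) (neg : P -> P)
          (rule : option P -> seq P -> Prop) (unsat : {fset P} -> Prop).

Definition tilde (H : {fset P}) : {fset P} := [fset neg h | h in H].

Fixpoint satW (N : nat) (H : {fset P}) : P -> Prop :=
  match N with
  | 0 => fun g => g \in H
  | N'.+1 => fun g => satW N' H g \/
      exists gs, rule (Some g) gs /\ forall x, x \in gs -> satW N' H x
  end.

Definition Sat_unsat (N : nat) (H : {fset P}) : Prop :=
  exists gs, rule None gs /\ forall x, x \in gs -> satW N H x.

Definition bounded_saturation (d : {fset P} -> nat) : Prop :=
  forall (H : {fset P}) (N : nat), d H <= N -> (Sat_unsat N H <-> unsat H).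

Definition DP_unsat (d : {fset P} -> nat) (H : {fset P}) : Prop :=
  Sat_unsat (d H) H.

Definition Dmax (d : {fset P} -> nat) (S : {fset P}) : nat :=
  \max_(S' <- fpowerset S) d S'.

Section SDP.
Variables (G E : {fset P}).
Let W0 : {fset P} := G `|` tilde E.

Fixpoint tau (i : nat) (g : P) : bexpr P :=
  match i with
  | 0 => if g \in tilde E then BConst true
         else if g \in G then BVar g else BConst false
  | i'.+1 =>
      BOr (fun k : (satW i' W0 g +
                    {gs : seq P | rule (Some g) gs /\
                                  forall x, x \in gs -> satW i' W0 x})%type =>
             match k with
             | inl _ => tau i' g
             | inr s => BAnd (fun x : {x : P | x \in sval s} => tau i' (sval x))
             end)
  end.

Definition SDP_N (d : {fset P} -> nat) : nat := Dmax d W0.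

Definition SDP (d : {fset P} -> nat) : bexpr P :=
  let N := SDP_N d in
  BOr (fun s : {gs : seq P | rule None gs /\ forall x, x \in gs -> satW N W0 x} =>
         BAnd (fun x : {x : P | x \in sval s} => tau N (sval x))).
End SDP.
End Theory.

(* The Boolean expression tau_(g,i), evaluated at G', holds exactly when g is
   in the i-th saturation round started from G' ∪ ~E: the disjuncts of tau are
   indexed by derivations from the larger set G ∪ ~E, but every derivation from
   G' ∪ ~E is one of them because saturation is monotone in its starting set,
   while leaves b_g with g outside G' evaluate to false.  Hence [tau_e]_G'
   holds iff Sat_N(G' ∪ ~E) is UNSATISFIABLE for N = D_T(G ∪ ~E), and since
   N >= d_T(G' ∪ ~E), bounded saturation makes this answer agree with
   DP_T(G' ∪ ~E). *)
From mathcomp Require Import all_boot all_order.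
From mathcomp Require Import finmap.
Set Implicit Arguments.
Unset Strict Implicit.
Local Open Scope fset_scope.

Section Saturation.
Variables (P : choiceType) (rule : option P -> seq P -> Prop).

Lemma satWS (H1 H2 : {fset P}) : H1 `<=` H2 ->
  forall i g, satW rule i H1 g -> satW rule i H2 g.
Proof.
move=> sH12; elim=> [|i IH] g /=; first exact: (fsubsetP sH12).
case=> [h|[gs [r h]]]; first by left; apply: IH.
by right; exists gs; split=> // x /h; apply: IH.
Qed.

Lemma Sat_unsat_bounded (unsat : {fset P} -> Prop) (d : {fset P} -> nat)
    (H : {fset P}) (N : nat) :
  bounded_saturation rule unsat d -> d H <= N ->
  Sat_unsat rule N H <-> DP_unsat rule d H.
Proof. by move=> hT leHN; rewrite /DP_unsat (hT _ _ leHN) (hT _ _ (leqnn _)). Qed.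

Lemma leq_Dmax (d : {fset P} -> nat) (S S' : {fset P}) :
  S' `<=` S -> d S' <= Dmax d S.
Proof.
move=> sS'S; apply: (@leq_bigmax_seq _ _ _ (fun X => d X)) => //.
by rewrite fpowersetE.
Qed.

End Saturation.

Section SymbolicDecisionProcedure.
Variables (P : choiceType) (neg : P -> P) (rule : option P -> seq P -> Prop).
Variables (G E G' : {fset P}).
Hypothesis sG'G : G' `<=` G.

Let in_G' (g : P) : bool := g \in G'.

Let sW0 : G' `|` tilde neg E `<=` G `|` tilde neg E := fsetSU _ sG'G.

Lemma beval_tau i g :
  beval in_G' (tau neg rule G E i g) <-> satW rule i (G' `|` tilde neg E) g.
Proof.
elim: i g => [|i IH] g /=.
  rewrite in_fsetU /in_G'.
  have [_|_] := boolP (g \in tilde neg E); first by rewrite orbT.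
  rewrite orbF; have [//|notG] := boolP (g \in G).
  by split=> // inG'; case/negP: notG; apply: (fsubsetP sG'G).
split.
  case=> -[_ /IH|[gs [r h]] hb]; first by left.
  by right; exists gs; split=> // x xin; apply/IH/(hb (exist _ x xin)).
case=> [h|[gs [r h]]].
  by exists (inl (satWS sW0 h)); apply/IH.
pose hW x (xin : x \in gs) := satWS sW0 (h x xin).
by exists (inr (exist _ gs (conj r hW))) => -[x xin]; apply/IH/h.
Qed.

Lemma beval_SDP d :
  beval in_G' (SDP neg rule G E d) <->
  Sat_unsat rule (SDP_N neg G E d) (G' `|` tilde neg E).
Proof.
split.
  case=> -[gs [r h]] /= hb; exists gs; split=> // x xin.
  exact/beval_tau/(hb (exist _ x xin)).
case=> gs [r h].
pose hW x (xin : x \in gs) := satWS sW0 (h x xin).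
by exists (exist _ gs (conj r hW)) => -[x xin]; apply/beval_tau/h.
Qed.

End SymbolicDecisionProcedure.

Theorem theorem3p3 (P : choiceType) (neg : P -> P)
    (rule : option P -> seq P -> Prop) (unsat : {fset P} -> Prop)
    (d : {fset P} -> nat) (hT : bounded_saturation rule unsat d)
    (G E : {fset P}) (G' : {fset P}) (hG' : G' `<=` G) :
  beval (fun g => g \in G') (SDP neg rule G E d) <->
  DP_unsat rule d (G' `|` tilde neg E).
Proof.
rewrite (beval_SDP neg rule E hG').
apply: Sat_unsat_bounded hT _.
exact/leq_Dmax/fsetSU.
Qed.
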